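(* Let $n=2$, and let $L\in K[D_1,D_2]$ have order $d$ and symbol $\operatorname{Sym}_L=S_1\cdots S_k$, where $S_1,\dots,S_k\in K[X_1,X_2]$ are pairwise coprime homogeneous polynomials. Then the ring of obstacles $K[X_1,X_2]/I$, where $I=(\operatorname{Sym}_L/S_1,\dots,\operatorname{Sym}_L/S_k)$, is zero in degree $d-1$: every homogeneous polynomial of degree $d-1$ lies in $I$. Consequently every common obstacle to factorization of $L$ of type $(S_1)\cdots(S_k)$ has order at most $d-2$.
   Context: $K$ is a field with commuting derivations $\partial_1,\partial_2$, and $K[D_1,D_2]$ is the ring of linear differential operators over $K$: $D_1D_2=D_2D_1$ and $D_i\circ a=aD_i+\partial_i(a)$ for $a\in K$. Every $L$ is uniquely $\sum a_{ij}D_1^iD_2^j$ with $a_{ij}\in K$. The order $\operatorname{ord}(L)$ is the largest $i+j$ with $a_{ij}\neq0$, and $\operatorname{ord}(0)=-\infty$. The symbol $\operatorname{Sym}_L=\sum_{i+j=\operatorname{ord}L}a_{ij}X_1^iX_2^j$. A factorization of type $(S_1)\cdots(S_k)$ of an operator $M$ is $M=F_1\circ\cdots\circ F_k$ with $\operatorname{Sym}_{F_i}=S_i$. A common obstacle to factorization of $L$ of that type is an operator $R$ such that $L-R$ has such a factorization and $R$ has minimal possible order among such operators. *)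

From HB Require Import structures.
From mathcomp Require Import all_boot all_order all_algebra.
From mathcomp Require Import mpoly.

Set Implicit Arguments.
Unset Strict Implicit.
Unset Printing Implicit Defensive.

Import Order.TTheory GRing.Theory.
Local Open Scope ring_scope.

Definition i1 : 'I_2 := @ord0 1.
Definition i2 : 'I_2 := @ord_max 1.

Definition is_derivation (K : fieldType) (d : K -> K) : Prop :=
  (forall a b, d (a + b) = d a + d b) /\ (forall a b, d (a * b) = d a * b + a * d b).

(* Linear differential operators L = sum a_ij D1^i D2^j over K are encoded by
   their coefficient data as elements of {mpoly K[2]}: the coefficient of the
   monomial X1^i X2^j is a_ij.  The ring structure of K[D1,D2] is NOT the
   commutative one of {mpoly K[2]}; it is given by [dmul] below. *)

(* Composition of operators:
   (a D1^i D2^j) o (b D1^k D2^l)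
     = sum_{g1<=i, g2<=j} C(i,g1) C(j,g2) a d1^g1 d2^g2 (b) D1^(i-g1+k) D2^(j-g2+l),
   which is the unique product with D1 D2 = D2 D1 and D_s o a = a D_s + d_s(a). *)
Definition dmul (K : fieldType) (d1 d2 : K -> K) (P Q : {mpoly K[2]}) : {mpoly K[2]} :=
  \sum_(m <- msupp P) \sum_(m' <- msupp Q)
   \sum_(g1 < (m i1).+1) \sum_(g2 < (m i2).+1)
     ((('C(m i1, g1) * 'C(m i2, g2))%:R * P@_m * iter g1 d1 (iter g2 d2 Q@_m'))
        *: ('X_i1 ^+ (m i1 - g1 + m' i1) * 'X_i2 ^+ (m i2 - g2 + m' i2))).

(* Order: ord L = (msize L).-1 for L != 0, and ord 0 = -oo.
   Hence "ord P <= ord Q" (with -oo <= everything) is exactly msize P <= msize Q. *)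
Definition ord_le (K : fieldType) (P Q : {mpoly K[2]}) : bool := (msize P <= msize Q)%N.

Definition Sym (K : fieldType) (L : {mpoly K[2]}) : {mpoly K[2]} :=
  \sum_(m <- msupp L | mdeg m == (msize L).-1) L@_m *: 'X_[m].

Definition has_factorization (K : fieldType) (d1 d2 : K -> K) (k : nat)
    (S : 'I_k -> {mpoly K[2]}) (M : {mpoly K[2]}) : Prop :=
  exists F : 'I_k -> {mpoly K[2]},
    (forall i, Sym (F i) = S i) /\ M = \big[dmul d1 d2/1]_(i < k) F i.

Definition common_obstacle (K : fieldType) (d1 d2 : K -> K) (k : nat)
    (S : 'I_k -> {mpoly K[2]}) (L R : {mpoly K[2]}) : Prop :=
  has_factorization d1 d2 S (L - R) /\
  forall R', has_factorization d1 d2 S (L - R') -> ord_le R R'.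

Definition mdivides (K : fieldType) (p q : {mpoly K[2]}) : Prop :=
  exists r, q = p * r.

Definition mcoprime (K : fieldType) (p q : {mpoly K[2]}) : Prop :=
  forall c, mdivides c p -> mdivides c q -> c \is a GRing.unit.

Definition in_ideal (K : fieldType) (k : nat) (g : 'I_k -> {mpoly K[2]})
    (P : {mpoly K[2]}) : Prop :=
  exists c : 'I_k -> {mpoly K[2]}, P = \sum_(i < k) c i * g i.

(* The symbol of a composition is the product of the symbols, and the part of
   order d - 1 of F_1 o ... o F_k depends on the lower parts G_i = F_i - S_i of
   the factors only through sum_i G_i * prod_(j != i) S_j.  So, starting from
   S_1 o ... o S_k, whose difference with L has order at most d - 1, the part
   of order d - 1 of that difference can be removed by perturbing the factors
   as soon as every form of degree d - 1 lies in the ideal I; what remains is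
   an operator of order at most d - 2, which bounds every common obstacle.
   To see that I contains all forms of degree d - 1, set X2 = 1: the S_i become
   pairwise coprime polynomials of which at most one loses degree (two coprime
   forms are not both divisible by X2), so Bezout's identity and induction on k
   give a partial fraction decomposition with the right degrees, which is then
   homogenized back. *)

From HB Require Import structures.
From mathcomp Require Import all_boot all_order all_algebra.
From mathcomp Require Import mpoly ssrcomplements.
From mathcomp Require Import zify ring.

Set Implicit Arguments.
Unset Strict Implicit.
Unset Printing Implicit Defensive.

Import GRing.Theory.
Local Open Scope ring_scope.

Section MsizeBounds.
Variables (n : nat) (R : nzRingType).
Implicit Types (p q : {mpoly R[n]}) (m : 'X_{1..n}).

Lemma msize_leq_mcoeff p b :
  (forall m, (b <= mdeg m)%N -> p@_m = 0) -> (msize p <= b)%N.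
Proof.
move=> hp; rewrite msizeE big_seq.
apply: (big_ind (fun x => x <= b)%N) => //= [x y hx hy|m hm]; first by rewrite geq_max hx hy.
by rewrite ltnNge; apply: contraTN hm => /hp /eqP; rewrite mcoeff_msupp negbK.
Qed.

Lemma mcoeff_eq0_msize p m : (msize p <= mdeg m)%N -> p@_m = 0.
Proof. by move/msize_mdeg_ge/memN_msupp_eq0. Qed.

Lemma msizeD_leq p q b :
  (msize p <= b)%N -> (msize q <= b)%N -> (msize (p + q) <= b)%N.
Proof. by move=> hp hq; apply: leq_trans (msizeD_le _ _) _; rewrite geq_max hp hq. Qed.

Lemma msizeB_leq p q b :
  (msize p <= b)%N -> (msize q <= b)%N -> (msize (p - q) <= b)%N.
Proof. by move=> hp hq; rewrite -(msizeN q) in hq; exact: msizeD_leq. Qed.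

Lemma msize_sum_leq (I : eqType) (r : seq I) (F : I -> {mpoly R[n]}) b :
  (forall i, i \in r -> msize (F i) <= b)%N -> (msize (\sum_(i <- r) F i) <= b)%N.
Proof.
move=> hF; rewrite big_seq; elim/big_rec: _ => [|i p ri hp]; first by rewrite msize0.
exact: msizeD_leq (hF i ri) hp.
Qed.

Lemma big_msupp_mdeg_lt (V : nmodType) b p (F : 'X_{1..n} -> R -> V) :
  (msize p <= b)%N -> (forall m, F m 0 = 0) ->
  \sum_(m <- msupp p) F m p@_m = \sum_(m : 'X_{1..n < b}) F m p@_m.
Proof.
move=> hp F0; pose I : subFinType _ := 'X_{1..n < b}.
rewrite (big_mksub I) //=; first last.
- by move=> m /msize_mdeg_lt /leq_trans; apply.
- exact: msupp_uniq.
by rewrite big_rmcond //= => m /memN_msupp_eq0 ->; rewrite F0.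
Qed.

Lemma msize_dhomog_leq p d : p \is d.-homog -> (msize p <= d.+1)%N.
Proof.
move=> hp; apply: msize_leq_mcoeff => m hm.
by apply: (dhomog_nemf_coeff hp); rewrite gtn_eqF.
Qed.

Lemma msize_dhomog p d : p != 0 -> p \is d.-homog -> msize p = d.+1.
Proof.
move=> nz hp; rewrite (mpolySpred _ nz); congr _.+1.
exact: dhomog_uniq nz (dhomog_msize hp) hp.
Qed.

Lemma dhomog_prod_cond k (S : 'I_k -> {mpoly R[n]}) (e : 'I_k -> nat) (P : pred 'I_k) :
  (forall i, S i \is (e i).-homog) ->
  \prod_(i < k | P i) S i \is (\sum_(i < k | P i) e i)%N.-homog.
Proof.
move=> hS; apply: (big_ind2 (fun p d => p \is d.-homog)) => //; first exact: dhomog1.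
by move=> p1 e1 p2 e2; apply: dhomogM.
Qed.

Lemma pihomog_eq0 p d : (msize p <= d)%N -> pihomog mdeg d p = 0.
Proof.
move=> hp; rewrite pihomogE big1_seq // => m /andP [/eqP hmd _].
by rewrite mcoeff_eq0_msize ?scale0r //= hmd.
Qed.

Lemma msize_sub_pihomog p d :
  (msize p <= d.+1)%N -> (msize (p - pihomog mdeg d p) <= d)%N.
Proof.
move=> hp; rewrite {1}(pihomog_partitionE hp) big_ord_recr /= addrK.
apply: msize_sum_leq => i _; apply: leq_trans (msize_dhomog_leq (pihomogP _ _ _)) _.
exact: ltn_ord.
Qed.

End MsizeBounds.
Arguments msizeD_leq {n R p q b}.
Arguments msizeB_leq {n R p q b}.

Section MsizeIdomain.
Variables (n : nat) (R : idomainType).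
Implicit Types (p q : {mpoly R[n]}).

Lemma msizeM_leq p q a b :
  (msize p <= a)%N -> (msize q <= b)%N -> (msize (p * q) <= (a + b).-1)%N.
Proof.
have [->|nzp] := eqVneq p 0; first by rewrite mul0r msize0.
have [->|nzq] := eqVneq q 0; first by rewrite mulr0 msize0.
by rewrite msizeM //; lia.
Qed.

Lemma msize_prod_cond k (S : 'I_k -> {mpoly R[n]}) (e : 'I_k -> nat) (P : pred 'I_k) :
  (forall i, msize (S i) = (e i).+1) ->
  msize (\prod_(i < k | P i) S i) = (\sum_(i < k | P i) e i)%N.+1.
Proof.
move=> hS; apply: (big_ind2 (fun p d => msize p = d.+1)) => //; first exact: msize1.
move=> p1 e1 p2 e2 h1 h2.
by rewrite msizeM -?msize_poly_eq0 ?h1 ?h2 // addSn addnS.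
Qed.

End MsizeIdomain.

Section Symbol.
Variable K : fieldType.
Implicit Types (p g : {mpoly K[2]}).

Lemma SymE p : Sym p = pihomog mdeg (msize p).-1 p.
Proof. by []. Qed.

Lemma Sym_dhomog p : Sym p \is ((msize p).-1).-homog.
Proof. exact: pihomogP. Qed.

Lemma msize_subSym p : (msize (p - Sym p) <= (msize p).-1)%N.
Proof. by apply: msize_sub_pihomog; rewrite leqSpred. Qed.

Lemma SymDl p g d : p != 0 -> p \is d.-homog -> (msize g <= d)%N -> Sym (p + g) = p.
Proof.
move=> nzp hp hg; have sp := msize_dhomog nzp hp.
have spg : msize (p + g) = d.+1.
  have h1 := msizeD_le p g; have h2 := msizeD_le (p + g) (- g).
  by rewrite addrK msizeN sp in h2; rewrite sp in h1; lia.
by rewrite SymE spg /= pihomogD pihomog_dE // pihomog_eq0 // addr0.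
Qed.

End Symbol.

Section ProdExcept.
Variable R : comPzRingType.

Definition prod_except k (S : 'I_k -> R) (i : 'I_k) := \prod_(j < k | j != i) S j.

Lemma prod_except0 k (S : 'I_k.+1 -> R) : prod_except S ord0 = \prod_(j < k) S (lift ord0 j).
Proof. by rewrite /prod_except big_mkcond big_ord_recl /= mul1r. Qed.

Lemma prod_except_lift k (S : 'I_k.+1 -> R) i :
  prod_except S (lift ord0 i) = S ord0 * prod_except (fun j => S (lift ord0 j)) i.
Proof.
rewrite /prod_except big_mkcond big_ord_recl /=; congr (_ * _).
rewrite [RHS]big_mkcond; apply: eq_bigr => j _.
by rewrite (inj_eq (@lift_inj _ ord0)).
Qed.

End ProdExcept.

Section TwoVariables.
Variable R : nzRingType.
Implicit Types (m : 'X_{1..2}).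

Lemma i2E : i2 = lift ord0 ord0. Proof. exact: val_inj. Qed.

Lemma mdeg2 m : mdeg m = (m i1 + m i2)%N.
Proof. by rewrite mdegE !big_ord_recl big_ord0 addn0 i2E. Qed.

Lemma mnm2_eq m m' : m i1 = m' i1 -> m i2 = m' i2 -> m = m'.
Proof.
move=> h1 h2; apply/mnmP => -[[|[|i]] hi] //.
- by rewrite (_ : Ordinal hi = i1) //; exact: val_inj.
- by rewrite (_ : Ordinal hi = i2) //; exact: val_inj.
Qed.

Lemma mpolyX2 m : 'X_[m] = 'X_i1 ^+ m i1 * 'X_i2 ^+ m i2 :> {mpoly R[2]}.
Proof. by rewrite mpolyXE_id !big_ord_recl big_ord0 mulr1 i2E. Qed.

Lemma msize_scaleX2 (c : R) u v :
  (msize (c *: ('X_i1 ^+ u * 'X_i2 ^+ v) : {mpoly R[2]}) <= (u + v).+1)%N.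
Proof.
apply: leq_trans (msizeZ_le _ _) _.
by rewrite !mpolyXn -mpolyXD msizeX mdegD !mdegMn !mdeg1 !mul1n.
Qed.

End TwoVariables.

Section Derivation.
Variables (K : fieldType) (d : K -> K).
Hypothesis hd : is_derivation d.

Lemma derivationB a b : d (a - b) = d a - d b.
Proof. by apply/eqP; rewrite eq_sym subr_eq -hd.1 subrK. Qed.

Lemma iter_derivationB g a b : iter g d (a - b) = iter g d a - iter g d b.
Proof. by elim: g => //= g ->; rewrite derivationB. Qed.

End Derivation.

Section Composition.
Variables (K : fieldType) (d1 d2 : K -> K).
Hypotheses (hd1 : is_derivation d1) (hd2 : is_derivation d2).
Implicit Types (P Q : {mpoly K[2]}) (m : 'X_{1..2}) (c : K).

Definition dmul_term m c m' c' : {mpoly K[2]} :=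
  \sum_(g1 < (m i1).+1) \sum_(g2 < (m i2).+1)
     ((('C(m i1, g1) * 'C(m i2, g2))%:R * c * iter g1 d1 (iter g2 d2 c'))
        *: ('X_i1 ^+ (m i1 - g1 + m' i1) * 'X_i2 ^+ (m i2 - g2 + m' i2))).

Definition dmul_row Q m c := \sum_(m' <- msupp Q) dmul_term m c m' Q@_m'.

Lemma dmulE P Q : dmul d1 d2 P Q = \sum_(m <- msupp P) dmul_row Q m P@_m.
Proof. by []. Qed.

Lemma dmul_termBl m a b m' c' :
  dmul_term m (a - b) m' c' = dmul_term m a m' c' - dmul_term m b m' c'.
Proof.
rewrite /dmul_term -sumrB; apply: eq_bigr => g1 _; rewrite -sumrB.
by apply: eq_bigr => g2 _; rewrite mulrBr mulrBl scalerBl.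
Qed.

Lemma dmul_termBr m c m' a b :
  dmul_term m c m' (a - b) = dmul_term m c m' a - dmul_term m c m' b.
Proof.
rewrite /dmul_term -sumrB; apply: eq_bigr => g1 _; rewrite -sumrB.
apply: eq_bigr => g2 _.
by rewrite (iter_derivationB hd2) (iter_derivationB hd1) mulrBr scalerBl.
Qed.

Lemma dmul_row0 Q m : dmul_row Q m 0 = 0.
Proof.
rewrite /dmul_row big1 // => m' _.
by have := dmul_termBl m 0 0 m' Q@_m'; rewrite subr0 subrr.
Qed.

Lemma dmulBl P P' Q : dmul d1 d2 (P - P') Q = dmul d1 d2 P Q - dmul d1 d2 P' Q.
Proof.
pose b := maxn (msize P) (maxn (msize P') (msize (P - P'))).
rewrite !dmulE !(@big_msupp_mdeg_lt _ _ _ b _ (dmul_row Q));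
  try by [lia | exact: dmul_row0].
rewrite -sumrB; apply: eq_bigr => m _.
by rewrite mcoeffB /dmul_row -sumrB; apply: eq_bigr => m' _; rewrite dmul_termBl.
Qed.

Lemma dmulBr P Q Q' : dmul d1 d2 P (Q - Q') = dmul d1 d2 P Q - dmul d1 d2 P Q'.
Proof.
rewrite !dmulE -sumrB; apply: eq_bigr => m _; rewrite /dmul_row.
pose b := maxn (msize Q) (maxn (msize Q') (msize (Q - Q'))).
have F0 m' : dmul_term m P@_m m' 0 = 0.
  by have := dmul_termBr m P@_m m' 0 0; rewrite subr0 subrr.
rewrite !(@big_msupp_mdeg_lt _ _ _ b _ (dmul_term m P@_m)); try by [lia | exact: F0].
by rewrite -sumrB; apply: eq_bigr => m' _; rewrite mcoeffB dmul_termBr.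
Qed.

(* Only the term with no derivative taken, [P@_m Q@_m' X^(m + m')], has top degree. *)
Lemma msize_dmul_sub_mul P Q :
  (msize (dmul d1 d2 P Q - P * Q) <= (msize P + msize Q).-2)%N.
Proof.
have -> : P * Q = \sum_(m <- msupp P) \sum_(m' <- msupp Q)
    (P@_m * Q@_m') *: ('X_i1 ^+ (m i1 + m' i1) * 'X_i2 ^+ (m i2 + m' i2)).
  rewrite mpolyME big_allpairs; apply: eq_bigr => m _; apply: eq_bigr => m' _.
  by rewrite mpolyX2 !mnmDE.
rewrite dmulE -sumrB; apply: msize_sum_leq => m /msize_mdeg_lt hm.
rewrite /dmul_row -sumrB; apply: msize_sum_leq => m' /msize_mdeg_lt hm'.
rewrite mdeg2 in hm; rewrite mdeg2 in hm'.
rewrite /dmul_term big_ord_recl [X in X + _ - _]big_ord_recl.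
rewrite !bin0 !subn0 muln1 mul1r addrC addrA addKr.
apply: msizeD_leq.
- apply: msize_sum_leq => g2 _; apply: leq_trans (msize_scaleX2 _ _ _) _.
  have := ltn_ord g2; rewrite lift0; lia.
- apply: msize_sum_leq => g1 _; apply: msize_sum_leq => g2 _.
  apply: leq_trans (msize_scaleX2 _ _ _) _.
  have := ltn_ord g1; have := ltn_ord g2; rewrite lift0; lia.
Qed.

Lemma msize_dmul_sub_linear (A A0 B B0 : {mpoly K[2]}) a b :
  (msize A0 <= a.+1)%N -> (msize (A - A0) <= a)%N ->
  (msize B0 <= b.+1)%N -> (msize (B - B0) <= b)%N ->
  (msize (dmul d1 d2 A B - dmul d1 d2 A0 B0 - ((A - A0) * B0 + A0 * (B - B0)))
     <= (a + b).-1)%N.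
Proof.
move=> sA0 sA sB0 sB; have sB1 : (msize B <= b.+1)%N.
  by rewrite -(subrK B0 B); apply: msizeD_leq => //; exact: leq_trans sB _.
have -> : dmul d1 d2 A B - dmul d1 d2 A0 B0 - ((A - A0) * B0 + A0 * (B - B0)) =
    (dmul d1 d2 (A - A0) B - (A - A0) * B) + (A - A0) * (B - B0)
    + (dmul d1 d2 A0 (B - B0) - A0 * (B - B0)).
  by rewrite dmulBl dmulBr; ring.
apply: msizeD_leq; [apply: msizeD_leq|].
- by apply: leq_trans (msize_dmul_sub_mul _ _) _; lia.
- by apply: leq_trans (msizeM_leq sA sB) _; lia.
- by apply: leq_trans (msize_dmul_sub_mul _ _) _; lia.
Qed.

End Composition.

Section IteratedComposition.
Variables (K : fieldType) (d1 d2 : K -> K).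
Hypotheses (hd1 : is_derivation d1) (hd2 : is_derivation d2).

Definition dcomp k (F : 'I_k -> {mpoly K[2]}) := \big[dmul d1 d2/1]_(i < k) F i.

Lemma dcompS k (F : 'I_k.+1 -> {mpoly K[2]}) :
  dcomp F = dmul d1 d2 (F ord0) (dcomp (fun i => F (lift ord0 i))).
Proof. by rewrite /dcomp big_ord_recl. Qed.

Lemma msize_dcomp_sub_prod k (S : 'I_k -> {mpoly K[2]}) (e : 'I_k -> nat) :
  (forall i, msize (S i) = (e i).+1) ->
  (msize (dcomp S - \prod_(i < k) S i) <= \sum_(i < k) e i)%N.
Proof.
elim: k S e => [|k IH] S e hS; first by rewrite /dcomp !big_ord0 subrr msize0.
rewrite dcompS !big_ord_recl.
set S' : 'I_k -> _ := fun i => S (lift ord0 i).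
set e' : 'I_k -> nat := fun i => e (lift ord0 i).
have hS' i : msize (S' i) = (e' i).+1 by apply: hS.
have IH' := IH S' e' hS'.
have hP := msize_prod_cond xpredT hS'.
set C := dcomp S' in IH' *; set E := (\sum_(i < k) e' i)%N in IH' hP *.
have hC : (msize C <= E.+1)%N.
  rewrite -(subrK (\prod_(i < k) S' i) C).
  by apply: msizeD_leq; [exact: leq_trans IH' _ | rewrite hP].
have -> : dmul d1 d2 (S ord0) C - S ord0 * \prod_(i < k) S' i =
    (dmul d1 d2 (S ord0) C - S ord0 * C) + S ord0 * (C - \prod_(i < k) S' i).
  by rewrite mulrBr addrA subrK.
apply: msizeD_leq.
  by apply: leq_trans (msize_dmul_sub_mul _ _ _ _) _; rewrite hS; lia.
by apply: leq_trans (msizeM_leq (leqnn _) IH') _; rewrite hS; lia.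
Qed.

Lemma msize_sum_prod_except k (S G : 'I_k -> {mpoly K[2]}) (e : 'I_k -> nat) :
  (forall i, msize (S i) = (e i).+1) -> (forall i, (msize (G i) <= e i)%N) ->
  (msize (\sum_(i < k) G i * prod_except S i) <= \sum_(i < k) e i)%N.
Proof.
move=> hS hG; apply: msize_sum_leq => i _.
apply: leq_trans (msizeM_leq (hG i) (leqnn _)) _.
by rewrite /prod_except (msize_prod_cond _ hS) [leqRHS](bigD1 i) //= addnS.
Qed.

Lemma msize_dcomp_sub_linear k (S F : 'I_k -> {mpoly K[2]}) (e : 'I_k -> nat) :
  (forall i, msize (S i) = (e i).+1) -> (forall i, (msize (F i - S i) <= e i)%N) ->
  (msize (dcomp F - dcomp S - \sum_(i < k) (F i - S i) * prod_except S i)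
     <= (\sum_(i < k) e i).-1)%N.
Proof.
elim: k S F e => [|k IH] S F e hS hF.
  by rewrite /dcomp !big_ord0 subrr sub0r oppr0 msize0.
rewrite !dcompS !big_ord_recl prod_except0.
set S' : 'I_k -> _ := fun i => S (lift ord0 i).
set F' : 'I_k -> _ := fun i => F (lift ord0 i).
set e' : 'I_k -> nat := fun i => e (lift ord0 i).
have hS' i : msize (S' i) = (e' i).+1 by apply: hS.
have hF' i : (msize (F' i - S' i) <= e' i)%N by apply: hF.
have IH' := IH S' F' e' hS' hF'.
have hSig := msize_sum_prod_except hS' hF'.
have hC2 := msize_dcomp_sub_prod hS'.
have hP := msize_prod_cond xpredT hS'.
set B := dcomp F' in IH' *; set B0 := dcomp S' in IH' hC2 *.
set P := \prod_(i < k) S' i in hC2 hP *.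
set Sig := \sum_(i < k) (F' i - S' i) * prod_except S' i in IH' hSig *.
set E := (\sum_(i < k) e' i)%N in IH' hSig hC2 hP *.
set A := F ord0; set A0 := S ord0.
have -> : \sum_(i < k) (F (lift ord0 i) - S (lift ord0 i)) * prod_except S (lift ord0 i)
    = A0 * Sig.
  by rewrite mulr_sumr; apply: eq_bigr => i _; rewrite prod_except_lift mulrCA.
have hA0 : msize A0 = (e ord0).+1 by apply: hS.
have hA : (msize (A - A0) <= e ord0)%N by apply: hF.
have hB0 : (msize B0 <= E.+1)%N.
  by rewrite -(subrK P B0); apply: msizeD_leq; [exact: leq_trans hC2 _ | rewrite hP].
have hBB0 : (msize (B - B0) <= E)%N.
  by rewrite -(subrK Sig (B - B0)); apply: msizeD_leq => //; apply: leq_trans IH' _; lia.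
have -> : dmul d1 d2 A B - dmul d1 d2 A0 B0 - ((A - A0) * P + A0 * Sig) =
    (dmul d1 d2 A B - dmul d1 d2 A0 B0 - ((A - A0) * B0 + A0 * (B - B0)))
    + (A - A0) * (B0 - P) + A0 * (B - B0 - Sig) by ring.
apply: msizeD_leq; [apply: msizeD_leq|].
- exact: msize_dmul_sub_linear (eq_leq hA0) hA hB0 hBB0.
- exact: msizeM_leq hA hC2.
- have [E0|Epos] := posnP E.
    by move: IH'; rewrite E0 leqn0 msize_poly_eq0 => /eqP ->; rewrite mulr0 msize0.
  by apply: leq_trans (msizeM_leq (eq_leq hA0) IH') _; lia.
Qed.

End IteratedComposition.

Section PartialFractions.
Variable K : fieldType.
Implicit Types (A B p : {poly K}).

Lemma coprimep_bezout_size A B p al be : coprimep A B ->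
  size A = al.+1 -> (size B <= be.+1)%N -> (size p <= al + be)%N ->
  exists u v : {poly K}, [/\ (size u <= be)%N, (size v <= al)%N & p = u * A + v * B].
Proof.
move=> /Bezout_eq1_coprimepP [[u0 v0] /= huv] sA sB sp.
have nzA : A != 0 by rewrite -size_poly_eq0 sA.
set v := (p * v0) %% A; set q := (p * v0) %/ A.
have hv : v = p * v0 - q * A by rewrite [p * v0](divp_eq _ A) addrC addKr.
have ep : p = (p * u0 + q * B) * A + v * B by rewrite hv -{1}[p]mulr1 -huv; ring.
have sv : (size v <= al)%N by rewrite -ltnS -sA ltn_modp.
exists (p * u0 + q * B), v; split => //.
set u := p * u0 + q * B in ep *.
have [->|nzu] := eqVneq u 0; first by rewrite size_poly0.
have : (size (u * A)%R <= al + be)%N.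
  rewrite (_ : u * A = p - v * B); last by rewrite [in RHS]ep addrK.
  apply: leq_trans (size_polyD _ _) _; rewrite size_polyN geq_max sp /=.
  apply: leq_trans (size_polyMleq _ _) _.
  by rewrite -subn1 leq_subLR add1n -addnS leq_add.
by rewrite size_mul // sA addnS /= addnC leq_add2l.
Qed.

Lemma coprimep_bezout_size_either A B p al be : coprimep A B ->
  (size A <= al.+1)%N -> (size B <= be.+1)%N -> size A = al.+1 \/ size B = be.+1 ->
  (size p <= al + be)%N ->
  exists u v : {poly K}, [/\ (size u <= be)%N, (size v <= al)%N & p = u * A + v * B].
Proof.
move=> cop sA sB [fA|fB] sp; first exact: coprimep_bezout_size.
rewrite coprimep_sym in cop; rewrite addnC in sp.
have [u [v [su sv ->]]] := coprimep_bezout_size cop fB sA sp.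
by exists v, u; rewrite addrC.
Qed.

Lemma size_prod_leq_cond k (a : 'I_k -> {poly K}) (e : 'I_k -> nat) (P : pred 'I_k) :
  (forall i, a i != 0) -> (forall i, (size (a i) <= (e i).+1)%N) ->
  \prod_(i < k | P i) a i != 0 /\
  (size (\prod_(i < k | P i) a i)%R <= (\sum_(i < k | P i) e i).+1)%N.
Proof.
move=> nza sa; pose Q (q : {poly K}) d := q != 0 /\ (size q <= d.+1)%N.
suff : Q (\prod_(i < k | P i) a i) (\sum_(i < k | P i) e i)%N by [].
apply: big_ind2 => //; rewrite /Q.
  by rewrite oner_eq0 size_poly1.
move=> q1 d1 q2 d2 [nz1 s1] [nz2 s2]; rewrite mulf_neq0 // size_mul //; split => //.
by rewrite -subn1 leq_subLR add1n -addnS -addSn leq_add.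
Qed.

Lemma size_prod_cond k (a : 'I_k -> {poly K}) (e : 'I_k -> nat) (P : pred 'I_k) :
  (forall i, size (a i) = (e i).+1) ->
  size (\prod_(i < k | P i) a i) = (\sum_(i < k | P i) e i)%N.+1.
Proof.
move=> sa; apply: (big_ind2 (fun (q : {poly K}) d => size q = d.+1)) => //; first exact: size_poly1.
move=> q1 d1 q2 d2 s1 s2.
by rewrite size_mul -?size_poly_eq0 ?s1 ?s2 // addSn addnS.
Qed.

Lemma coprimep_prodl k (a : 'I_k -> {poly K}) B :
  (forall i, coprimep (a i) B) -> coprimep (\prod_(i < k) a i) B.
Proof.
move=> h; apply: (big_ind (fun q => coprimep q B)) => //; first exact: coprime1p.
by move=> x y hx hy; rewrite coprimepMl hx hy.
Qed.

(* Without the hypothesis that at most one [a i] has a degree defect the bounds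
   on the [c i] fail, e.g. for [a 0 = a 1 = 1] and [e 0 = e 1 = 1]. *)
Lemma prod_except_decomposition k (a : 'I_k -> {poly K}) (e : 'I_k -> nat) :
  (forall i, a i != 0) -> (forall i, (size (a i) <= (e i).+1)%N) ->
  (forall i j, i != j -> coprimep (a i) (a j)) ->
  (forall i j, i != j -> size (a i) = (e i).+1 \/ size (a j) = (e j).+1) ->
  forall p, (size p <= \sum_(i < k) e i)%N ->
  exists c : 'I_k -> {poly K}, (forall i, (size (c i) <= e i)%N) /\
     p = \sum_(i < k) c i * prod_except a i.
Proof.
elim: k a e => [|k IH] a e nza sa cop full p sp.
  exists (fun _ => 0); split; first by case.
  by move: sp; rewrite big_ord0 size_poly_leq0 => /eqP ->; rewrite big_ord0.
set a' : 'I_k -> _ := fun i => a (lift ord0 i).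
set e' : 'I_k -> nat := fun i => e (lift ord0 i).
have lift_neq i j : i != j -> lift ord0 i != lift ord0 j.
  by rewrite (inj_eq (@lift_inj _ ord0)).
have nza' i : a' i != 0 by apply: nza.
have sa' i : (size (a' i) <= (e' i).+1)%N by apply: sa.
have cop' i j : i != j -> coprimep (a' i) (a' j) by move/lift_neq; apply: cop.
have full' i j : i != j -> size (a' i) = (e' i).+1 \/ size (a' j) = (e' j).+1.
  by move/lift_neq; apply: full.
set A := \prod_(i < k) a' i; set B := a ord0.
set al := (\sum_(i < k) e' i)%N; set be := e ord0.
have [_ sA] := size_prod_leq_cond xpredT nza' sa'.
have copAB : coprimep A B.
  by apply: coprimep_prodl => i; apply: cop; rewrite eq_sym neq_lift.
have sp' : (size p <= al + be)%N by move: sp; rewrite big_ord_recl addnC.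
have full0 : size A = al.+1 \/ size B = be.+1.
  have [fB|nfB] := eqVneq (size B) be.+1; [by right | left].
  apply: size_prod_cond => i; have := full ord0 (lift ord0 i) (neq_lift _ _).
  by case=> // hB; rewrite hB eqxx in nfB.
have [c0 [w [sc0 sw ep]]] := coprimep_bezout_size_either copAB sA (sa ord0) full0 sp'.
have [c' [sc' ew]] := IH a' e' nza' sa' cop' full' w sw.
exists (fun i => if unlift ord0 i is Some j then c' j else c0); split.
  by move=> i; case: (unliftP ord0 i) => [j ->|->] /=; rewrite ?liftK ?unlift_none.
rewrite big_ord_recl /= unlift_none prod_except0 -/A ep; congr (_ + _).
rewrite ew mulr_suml; apply: eq_bigr => i _.
by rewrite liftK prod_except_lift -/B mulrCA mulrC.
Qed.

End PartialFractions.

Section Dehomogenization.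
Variable K : fieldType.
Implicit Types (P : {mpoly K[2]}) (p q : {poly K}).

Definition dehomog : {mpoly K[2]} -> {poly K} :=
  mmap (@polyC K) (fun i : 'I_2 => if i == i1 then 'X else 1).
HB.instance Definition _ := GRing.RMorphism.copy dehomog
  (mmap (@polyC K) (fun i : 'I_2 => if i == i1 then 'X else 1)).

Lemma dehomogZX c (m : 'X_{1..2}) : dehomog (c *: 'X_[m]) = c *: 'X^(m i1).
Proof.
rewrite /dehomog mmapZ mmapX /mmap1 !big_ord_recl big_ord0 /= -i2E /=.
by rewrite expr1n !mulr1 mul_polyC.
Qed.

Lemma dehomogE P : dehomog P = \sum_(m <- msupp P) P@_m *: 'X^(m i1).
Proof.
by rewrite {1}[P]mpolyE rmorph_sum /=; apply: eq_bigr => m _; rewrite dehomogZX.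
Qed.

Lemma size_dehomog_leq P d : P \is d.-homog -> (size (dehomog P) <= d.+1)%N.
Proof.
move=> hP; rewrite dehomogE big_seq; elim/big_rec: _ => [|m q hm hq].
  by rewrite size_poly0.
apply: leq_trans (size_polyD _ _) _; rewrite geq_max hq andbT.
apply: leq_trans (size_scale_leq _ _) _; rewrite size_polyXn ltnS.
by have := dhomog_mf hP hm; rewrite /= mdeg2 => <-; exact: leq_addr.
Qed.

Definition mnm2 a b : 'X_{1..2} := [multinom (if j == i1 then a else b) | j < 2].

Lemma mnm2_i1 a b : mnm2 a b i1 = a.
Proof. by rewrite /mnm2 mnmE eqxx. Qed.

Lemma mnm2_i2 a b : mnm2 a b i2 = b.
Proof. by rewrite /mnm2 mnmE. Qed.

Definition homogenize n q : {mpoly K[2]} :=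
  \sum_(i < n.+1) q`_i *: 'X_[mnm2 i (n - i)].

Fact homogenize_is_linear n : linear (homogenize n).
Proof.
move=> c p q; rewrite /homogenize scaler_sumr -big_split; apply: eq_bigr => i _.
by rewrite coefD coefZ scalerDl scalerA.
Qed.

HB.instance Definition _ n := GRing.isLinear.Build K {poly K} {mpoly K[2]} _
  (homogenize n) (homogenize_is_linear n).

Lemma homogenizeXn n j : (j <= n)%N -> homogenize n 'X^j = 'X_[mnm2 j (n - j)].
Proof.
move=> hj; rewrite /homogenize (bigD1 (Ordinal (hj : (j < n.+1)%N))) //=.
rewrite coefXn eqxx scale1r big1 ?addr0 // => i ne; rewrite coefXn.
by case: eqP => [ij|]; [move: ne; rewrite -val_eqE /= ij eqxx | rewrite scale0r].
Qed.

Lemma homogenize_dhomog n q : homogenize n q \is n.-homog.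
Proof.
apply: rpred_sum => i _; apply: rpredZ.
by rewrite dhomogX /= mdeg2 mnm2_i1 mnm2_i2 subnKC // -ltnS.
Qed.

Lemma homogenizeK n q : (size q <= n.+1)%N -> dehomog (homogenize n q) = q.
Proof.
move=> hq; rewrite /homogenize rmorph_sum /=.
under eq_bigr => i _ do rewrite dehomogZX mnm2_i1.
rewrite -poly_def; apply/polyP => j; rewrite coef_poly; case: ltnP => // hj.
by rewrite nth_default //; exact: leq_trans hq hj.
Qed.

Lemma dehomogK n P : P \is n.-homog -> homogenize n (dehomog P) = P.
Proof.
move=> hP; rewrite dehomogE linear_sum [RHS]mpolyE big_seq [RHS]big_seq.
apply: eq_bigr => m hm; have := dhomog_mf hP hm; rewrite /= mdeg2 => hmn.
rewrite linearZ /= homogenizeXn -?hmn ?leq_addr //; congr (_ *: 'X_[_]).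
by apply: mnm2_eq; rewrite ?mnm2_i1 ?mnm2_i2 // addKn.
Qed.

Lemma homogenizeM a b p q : (size p <= a.+1)%N -> (size q <= b.+1)%N ->
  homogenize (a + b) (p * q) = homogenize a p * homogenize b q.
Proof.
move=> hp hq; have hom := dhomogM (homogenize_dhomog a p) (homogenize_dhomog b q).
by rewrite -[RHS](dehomogK hom) rmorphM /= !homogenizeK.
Qed.

Lemma dehomog_eq0 n P : P \is n.-homog -> (dehomog P == 0) = (P == 0).
Proof.
move=> hP; apply/eqP/eqP => [h|->]; last exact: rmorph0.
by rewrite -(dehomogK hP) h linear0.
Qed.

Lemma size_dehomog_unit P : P \is a GRing.unit -> size (dehomog P) = 1%N.
Proof. by move/(rmorph_unit dehomog); rewrite poly_unitE => /andP [/eqP]. Qed.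

End Dehomogenization.

Section CoprimeForms.
Variable K : fieldType.
Implicit Types (U S T : {mpoly K[2]}).

Lemma dvdp_dehomog (g : {poly K}) U u : U != 0 -> U \is u.-homog ->
  g %| dehomog U -> mdivides (homogenize (size g).-1 g) U.
Proof.
move=> nzU hU /dvdpP [r hr].
have nzr : r != 0 by apply: contraNneq nzU => r0; rewrite -(dehomog_eq0 hU) hr r0 mul0r.
have nzg : g != 0 by apply: contraNneq nzU => g0; rewrite -(dehomog_eq0 hU) hr g0 mulr0.
have hsize : ((size r + size g).-1 <= u.+1)%N.
  by rewrite -size_mul // -hr size_dehomog_leq.
have gt0g : (0 < size g)%N by rewrite size_poly_gt0.
have gt0r : (0 < size r)%N by rewrite size_poly_gt0.
have sg : (size g <= (size g).-1.+1)%N by rewrite leqSpred.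
have sr : (size r <= (u - (size g).-1).+1)%N by lia.
have ha : ((size g).-1 <= u)%N by lia.
exists (homogenize (u - (size g).-1) r).
by rewrite -(dehomogK hU) hr -{1}(subnK ha) homogenizeM // mulrC.
Qed.

Lemma coprimep_dehomog S T e f : S != 0 -> T != 0 ->
  S \is e.-homog -> T \is f.-homog -> mcoprime S T ->
  coprimep (dehomog S) (dehomog T).
Proof.
move=> nzS nzT hS hT cop; set g := gcdp (dehomog S) (dehomog T).
have := cop _ (dvdp_dehomog nzS hS (dvdp_gcdl _ _)) (dvdp_dehomog nzT hT (dvdp_gcdr _ _)).
move/size_dehomog_unit; rewrite homogenizeK ?leqSpred // => sg.
by rewrite /coprimep -/g sg.
Qed.

(* Two coprime forms cannot both be divisible by [X2], i.e. both lose degree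
   when [X2] is set to [1]. *)
Lemma dehomog_size_full S T e f : S != 0 -> T != 0 ->
  S \is e.-homog -> T \is f.-homog -> mcoprime S T ->
  size (dehomog S) = e.+1 \/ size (dehomog T) = f.+1.
Proof.
move=> nzS nzT hS hT cop.
set X := homogenize 1 (1 : {poly K}).
have dvdX U u : U != 0 -> U \is u.-homog -> (size (dehomog U) < u.+1)%N ->
    mdivides X U.
  move=> nzU hU sU; have nzu : (0 < u)%N.
    by case: u hU sU => // hU; rewrite ltnS leqn0 size_poly_eq0 (dehomog_eq0 hU) (negbTE nzU).
  exists (homogenize u.-1 (dehomog U)).
  have eu : (u.-1 + 1)%N = u by rewrite addn1 prednK.
  by rewrite mulrC -homogenizeM ?size_poly1 ?prednK // mulr1 eu dehomogK.
have nuX : ~~ (X \is a GRing.unit).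
  have nzX : X != 0.
    by rewrite -(dehomog_eq0 (homogenize_dhomog _ _)) homogenizeK ?size_poly1 ?oner_eq0.
  have sX := msize_dhomog nzX (homogenize_dhomog 1 1).
  apply/negP => /unitrP [v [hv _]].
  have nzv : v != 0 by apply: contra_eq_neq hv => ->; rewrite mul0r eq_sym oner_eq0.
  have := congr1 (fun p => msize p) hv; rewrite /= msizeM // sX msize1 addn2.
  by move/eqP; rewrite /= eqSS msize_poly_eq0 (negbTE nzv).
have [sS|sS] := eqVneq (size (dehomog S)) e.+1; first by left.
have [sT|sT] := eqVneq (size (dehomog T)) f.+1; first by right.
exfalso; move/negP: nuX; apply; apply: (cop X).
  by apply: (dvdX _ e nzS hS); rewrite ltn_neqAle sS size_dehomog_leq.
by apply: (dvdX _ f nzT hT); rewrite ltn_neqAle sT size_dehomog_leq.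
Qed.

Lemma dhomog_prod_except_span k (S : 'I_k -> {mpoly K[2]}) (e : 'I_k -> nat) :
  (forall i, S i != 0) -> (forall i, S i \is (e i).-homog) ->
  (forall i j, i != j -> mcoprime (S i) (S j)) ->
  forall P, (0 < \sum_(i < k) e i)%N -> P \is (\sum_(i < k) e i)%N.-1.-homog ->
  exists G : 'I_k -> {mpoly K[2]},
    (forall i, (msize (G i) <= e i)%N) /\ P = \sum_(i < k) G i * prod_except S i.
Proof.
move=> nzS hS cop P dpos hP.
have nzdS i : dehomog (S i) != 0 by rewrite (dehomog_eq0 (hS i)).
have sS i : (size (dehomog (S i)) <= (e i).+1)%N := size_dehomog_leq (hS i).
have full i j : i != j ->
    size (dehomog (S i)) = (e i).+1 \/ size (dehomog (S j)) = (e j).+1.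
  by move=> ne; exact: dehomog_size_full (nzS i) (nzS j) (hS i) (hS j) (cop i j ne).
have copd i j : i != j -> coprimep (dehomog (S i)) (dehomog (S j)).
  by move=> ne; exact: coprimep_dehomog (nzS i) (nzS j) (hS i) (hS j) (cop i j ne).
have sP : (size (dehomog P) <= \sum_(i < k) e i)%N.
  by have := size_dehomog_leq hP; rewrite prednK.
have [c [sc ec]] := prod_except_decomposition nzdS sS copd full sP.
exists (fun i => homogenize (e i).-1 (c i)); split.
  move=> i; have [e0|epos] := posnP (e i).
    by move: (sc i); rewrite e0 size_poly_leq0 => /eqP ->; rewrite linear0 msize0.
  by apply: leq_trans (msize_dhomog_leq (homogenize_dhomog _ _)) _; rewrite prednK.
rewrite -(dehomogK hP) ec linear_sum; apply: eq_bigr => i _.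
have [e0|epos] := posnP (e i).
  by move: (sc i); rewrite e0 size_poly_leq0 => /eqP ->; rewrite mul0r !linear0 mul0r.
have hT := dhomog_prod_cond (fun j => j != i) hS.
rewrite /prod_except -rmorph_prod /= (bigD1 i) //=.
have -> : (e i + \sum_(j < k | j != i) e j).-1 = ((e i).-1 + \sum_(j < k | j != i) e j)%N.
  by lia.
rewrite homogenizeM ?(dehomogK hT) ?prednK //; exact: size_dehomog_leq hT.
Qed.

End CoprimeForms.

Lemma factorization_with_small_remainder (K : fieldType) (d1 d2 : K -> K)
    k (S : 'I_k -> {mpoly K[2]}) (e : 'I_k -> nat) (L : {mpoly K[2]}) :
  is_derivation d1 -> is_derivation d2 ->
  (forall i, S i != 0) -> (forall i, S i \is (e i).-homog) ->
  (forall i j, i != j -> mcoprime (S i) (S j)) ->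
  msize L = (\sum_(i < k) e i)%N.+1 -> Sym L = \prod_(i < k) S i ->
  exists R, has_factorization d1 d2 S (L - R) /\
            (msize R <= (\sum_(i < k) e i)%N.-1)%N.
Proof.
move=> hd1 hd2 nzS hS cop sL hsym; set d := (\sum_(i < k) e i)%N in sL *.
have sS i : msize (S i) = (e i).+1 := msize_dhomog (nzS i) (hS i).
have SymS i G : (msize G <= e i)%N -> Sym (S i + G) = S i := SymDl (nzS i) (hS i).
have factor F : (forall i, Sym (F i) = S i) -> has_factorization d1 d2 S (L - (L - dcomp d1 d2 F)).
  by move=> hF; exists F; rewrite subKr.
set H := L - dcomp d1 d2 S.
have sH : (msize H <= d)%N.
  have -> : H = (L - Sym L) - (dcomp d1 d2 S - \prod_(i < k) S i) by rewrite hsym /H; ring.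
  apply: msizeB_leq; last exact: msize_dcomp_sub_prod.
  by have := msize_subSym L; rewrite sL.
have [d0|dpos] := posnP d.
  exists H; split; last by move: sH; rewrite d0.
  by apply: factor => i; have := SymS i 0; rewrite addr0 msize0; apply.
have [G [sG eG]] := dhomog_prod_except_span nzS hS cop dpos (pihomogP mdeg d.-1 H).
exists (L - dcomp d1 d2 (fun i => S i + G i)); split; first by apply: factor => i; exact: SymS.
have -> : L - dcomp d1 d2 (fun i => S i + G i) = (H - pihomog mdeg d.-1 H)
    - (dcomp d1 d2 (fun i => S i + G i) - dcomp d1 d2 S
       - \sum_(i < k) (S i + G i - S i) * prod_except S i).
  by under eq_bigr => i _ do rewrite addrC addKr; rewrite -eG /H; ring.
apply: msizeB_leq; first by apply: msize_sub_pihomog; rewrite prednK.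
by apply: msize_dcomp_sub_linear => // i; rewrite addrC addKr.
Qed.

Theorem mainTheorem10 (K : fieldType) (d1 d2 : K -> K)
    (hd1 : is_derivation d1) (hd2 : is_derivation d2)
    (hcomm : forall a, d1 (d2 a) = d2 (d1 a))
    (k : nat) (S : 'I_k -> {mpoly K[2]})
    (L : {mpoly K[2]}) (d : nat)
    (hord : msize L = d.+1)   (* L <> 0 and ord L = d *)
    (hhom : forall i, exists e, S i \is e.-homog)
    (hcop : forall i j, i != j -> mcoprime (S i) (S j))
    (hsym : Sym L = \prod_(i < k) S i) :
  (forall P : {mpoly K[2]}, (0 < d)%N -> P \is (d.-1).-homog ->
     in_ideal (fun i : 'I_k => \prod_(j < k | j != i) S j) P)
  /\
  (forall R : {mpoly K[2]}, common_obstacle d1 d2 S L R ->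
     R = 0 \/ ((msize R).-1 + 2 <= d)%N).
Proof.
have nzSymL : Sym L != 0.
  by apply/eqP => SymL0; have := msize_subSym L; rewrite SymL0 subr0 hord ltnn.
have nzS i : S i != 0.
  by apply: contraNneq nzSymL => Si0; rewrite hsym (bigD1 i) //= Si0 mul0r.
pose e i := (msize (S i)).-1.
have hS i : S i \is (e i).-homog by have [? /dhomog_msize] := hhom i.
have sum_e : (\sum_(i < k) e i)%N = d.
  apply: (dhomog_uniq nzSymL); first by rewrite hsym; exact: dhomog_prod_cond xpredT hS.
  by have := Sym_dhomog L; rewrite hord.
split=> [P dpos hP | R [factR minR]].
  rewrite -sum_e in dpos hP.
  by have [G [_ ->]] := dhomog_prod_except_span nzS hS hcop dpos hP; exists G.
have sL : msize L = (\sum_(i < k) e i)%N.+1 by rewrite sum_e.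
have [R' [factR' sR']] := factorization_with_small_remainder hd1 hd2 nzS hS hcop sL hsym.
have := minR R' factR'; rewrite /ord_le; rewrite sum_e in sR'.
have [R0|Rpos] := posnP (msize R); last by right; lia.
by left; apply/eqP; rewrite -msize_poly_eq0 R0.
Qed.
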